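(* Let $\sigma>0$, $\alpha>0$, and set $\eta=\sqrt{\alpha+1}$. Define $p(t)=(\alpha+1)\log(\sigma\eta+t)$ for $t\ge0$, and for $\hat\beta\in\mathbb{R}$ let $$\tilde\beta(\hat\beta)=\arg\min_{\beta\in\mathbb{R}}\left\{\tfrac12(\hat\beta-\beta)^2+\sigma^{2}p(|\beta|)\right\}.$$ Then for every $\hat\beta\in\mathbb{R}$ this minimizer is unique, and the estimator $\hat\beta\mapsto\tilde\beta(\hat\beta)$ is a continuous function of $\hat\beta$ on $\mathbb{R}$.
   Context: This penalty is the part of $-\log\pi(\beta\mid\sigma)$ depending on $\beta$ under the generalized double Pareto prior $\mathrm{GDP}(\xi=\sigma\eta/\alpha,\alpha)$ with density $\frac{1}{2\xi}(1+|\beta|/(\alpha\xi))^{-(\alpha+1)}$; the problem corresponds to one coordinate of penalized least squares with orthonormal design, $\hat\beta=\mathbf{x}_j'\mathbf{y}$. *)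

From Stdlib Require Import Reals.
Open Scope R_scope.

Definition gdp_eta (alpha : R) : R := sqrt (alpha + 1).

Definition gdp_pen (sigma alpha t : R) : R :=
  (alpha + 1) * ln (sigma * gdp_eta alpha + t).

Definition gdp_obj (sigma alpha bhat b : R) : R :=
  / 2 * (bhat - b) ^ 2 + sigma ^ 2 * gdp_pen sigma alpha (Rabs b).

Definition is_argmin (f : R -> R) (b : R) : Prop := forall y : R, f b <= f y.

(* With c = sigma * eta the objective is 1/2 (x - b)^2 + c^2 ln (c + |b|), since
   sigma^2 (alpha + 1) = c^2.  On b >= 0 its first-order condition
   (x - b)(c + b) = c^2 has a unique positive root once x > c, and none otherwise,
   in which case the minimum sits at 0.  That this stationary point is the strict
   global minimum reduces, via u = c + |b| and v = c + b*, to the fact that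
   t |-> c^2 ln t - c^2 t / v + (t - v)^2 / 2 is uniquely minimised at v on
   [c, oo).  The root has an explicit closed form that is continuous in x and
   vanishes on [-c, c]. *)

From Stdlib Require Import Reals Lra Psatz.
From Coquelicot Require Import Coquelicot.
Open Scope R_scope.

Lemma ln_quadratic_gap_pos (c u v : R) : 0 < c -> c <= u -> c <= v -> u <> v ->
  0 < c ^ 2 * (ln u - ln v) + c ^ 2 * (v - u) / v + (u - v) ^ 2 / 2.
Proof.
  intros hc hu hv huv.
  set (psi := fun t => c ^ 2 * ln t - c ^ 2 * t / v + (t - v) ^ 2 / 2).
  set (dpsi := fun t => c ^ 2 / t - c ^ 2 / v + (t - v)).
  replace (c ^ 2 * (ln u - ln v) + c ^ 2 * (v - u) / v + (u - v) ^ 2 / 2)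
    with (psi u - psi v) by (unfold psi; field; lra).
  assert (mvt : forall a b, c <= a < b ->
            exists xi, a < xi < b /\ psi b - psi a = dpsi xi * (b - a)).
  { intros a b hab.
    destruct (MVT_cor2 psi dpsi a b (proj2 hab)) as [xi [hval hxi]];
      [| exists xi; split; [exact hxi | lra]].
    intros t ht. apply is_derive_Reals. unfold psi, dpsi.
    auto_derive; [lra | field; lra]. }
  (* dpsi t = (t - v) (t v - c^2) / (t v), which has the sign of t - v when t, v >= c. *)
  assert (dpsi_sign : forall t, c <= t -> t <> v -> 0 < (t - v) * dpsi t).
  { intros t ht htv.
    assert (hprod : c ^ 2 < t * v).
    { destruct (Rlt_or_le c t); [nra|].
      destruct (Rle_lt_or_eq_dec c v hv); [nra|].
      exfalso. apply htv. lra. }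
    unfold dpsi.
    replace ((t - v) * (c ^ 2 / t - c ^ 2 / v + (t - v)))
      with ((t - v) ^ 2 * ((t * v - c ^ 2) / (t * v))) by (field; lra).
    apply Rmult_lt_0_compat; [nra|].
    apply Rdiv_lt_0_compat; nra. }
  destruct (Rdichotomy u v huv) as [h|h].
  - destruct (mvt u v (conj hu h)) as [xi [hxi hval]].
    pose proof (dpsi_sign xi ltac:(lra) ltac:(intro; lra)). nra.
  - destruct (mvt v u (conj hv h)) as [xi [hxi hval]].
    pose proof (dpsi_sign xi ltac:(lra) ltac:(intro; lra)). nra.
Qed.

Definition pos_part (t : R) : R := (t + Rabs t) / 2.

Lemma pos_part_nonpos (t : R) : t <= 0 -> pos_part t = 0.
Proof. intro h. unfold pos_part. rewrite Rabs_left1 by lra. field. Qed.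

Lemma pos_part_nonneg (t : R) : 0 <= t -> pos_part t = t.
Proof. intro h. unfold pos_part. rewrite Rabs_pos_eq by lra. field. Qed.

Lemma pos_part_ge0 (t : R) : 0 <= pos_part t.
Proof.
  destruct (Rle_or_lt t 0) as [h|h];
    [rewrite pos_part_nonpos | rewrite pos_part_nonneg]; lra.
Qed.

Lemma continuity_pos_part : continuity pos_part.
Proof.
  intro t. unfold pos_part.
  apply continuity_pt_div; [| apply continuity_pt_const; now intros ?? | lra].
  apply continuity_pt_plus; [apply continuity_pt_id | apply Rcontinuity_abs].
Qed.

Lemma is_argmin_of_strict (f : R -> R) (b : R) :
  (forall y, y <> b -> f b < f y) -> is_argmin f b.
Proof.
  intros hf y. destruct (Req_dec y b) as [->|hne]; [lra|].
  now apply Rlt_le, hf.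
Qed.

Lemma is_argmin_strict_eq (f : R -> R) (b b' : R) :
  (forall y, y <> b -> f b < f y) -> is_argmin f b' -> b' = b.
Proof.
  intros hf hb'. destruct (Req_dec b' b) as [e|hne]; [exact e|].
  specialize (hb' b). specialize (hf b' hne). lra.
Qed.

Section Shrinkage.

Variable c : R.
Hypothesis hc : 0 < c.

Definition obj (x b : R) : R := / 2 * (x - b) ^ 2 + c ^ 2 * ln (c + Rabs b).

Lemma obj_opp (x b : R) : obj (- x) (- b) = obj x b.
Proof. unfold obj. rewrite Rabs_Ropp. f_equal. f_equal. ring. Qed.

Lemma obj_sub_abs (x y : R) : obj x y - obj x (Rabs y) = x * (Rabs y - y).
Proof.
  unfold obj. rewrite Rabs_Rabsolu.
  destruct (Rle_or_lt 0 y);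
    [rewrite Rabs_pos_eq by lra | rewrite Rabs_left by lra]. all: field.
Qed.

(* First-order conditions for a minimum over b >= 0: the derivative
   -(x - B) + c^2 / (c + B) vanishes at B > 0 and is nonnegative at B = 0. *)
Definition stationary (x B : R) : Prop :=
  0 <= B <= x /\ (0 < B -> (x - B) * (c + B) = c ^ 2) /\ (B = 0 -> x <= c).

Lemma obj_lt_stationary_nonneg (x B y : R) :
  stationary x B -> 0 <= y -> y <> B -> obj x B < obj x y.
Proof.
  intros [hBx [hpos hzero]] hy hyB. unfold obj.
  rewrite !Rabs_pos_eq by lra.
  assert (hslope : c ^ 2 / (c + B) * (B - y) <= (x - B) * (B - y)).
  { destruct (Rle_lt_or_eq_dec 0 B (proj1 hBx)) as [hB|<-].
    - replace (c ^ 2) with ((x - B) * (c + B)) by now apply hpos.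
      right. field. lra.
    - replace (c ^ 2 / (c + 0)) with c by (field; lra).
      specialize (hzero eq_refl). nra. }
  pose proof (ln_quadratic_gap_pos c (c + y) (c + B) hc ltac:(lra) ltac:(lra)
                ltac:(lra)) as hgap.
  replace (c ^ 2 * (c + B - (c + y)) / (c + B)) with (c ^ 2 / (c + B) * (B - y))
    in hgap by (field; lra).
  nra.
Qed.

Lemma obj_lt_stationary (x B y : R) :
  stationary x B -> y <> B -> obj x B < obj x y.
Proof.
  intros hst hyB. destruct (Rle_or_lt 0 y) as [hy|hy].
  { now apply obj_lt_stationary_nonneg. }
  pose proof (obj_sub_abs x y) as hsub. rewrite Rabs_left in hsub by lra.
  destruct hst as [hBx hrest].
  destruct (Req_dec (- y) B) as [<-|hne].
  - nra.
  - pose proof (obj_lt_stationary_nonneg x B (- y) (conj hBx hrest)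
                  ltac:(lra) hne).
    nra.
Qed.

(* For m = z - c > 0, the positive root of B^2 - m B - c m, i.e. of
   (z - B) (c + B) = c^2. *)
Definition shrink_pos (z : R) : R :=
  let m := pos_part (z - c) in (m + sqrt (m * (m + 4 * c))) / 2.

(* An odd extension: at most one of the two terms is nonzero. *)
Definition shrink (x : R) : R := shrink_pos x - shrink_pos (- x).

Lemma shrink_pos_le (z : R) : z <= c -> shrink_pos z = 0.
Proof.
  intro h. unfold shrink_pos. rewrite pos_part_nonpos by lra.
  rewrite Rmult_0_l, sqrt_0. field.
Qed.

Lemma shrink_opp (x : R) : shrink (- x) = - shrink x.
Proof. unfold shrink. rewrite Ropp_involutive. ring. Qed.

Lemma stationary_shrink (x : R) : 0 <= x -> stationary x (shrink x).
Proof.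
  intro hx. unfold shrink. rewrite (shrink_pos_le (- x)), Rminus_0_r by lra.
  destruct (Rle_or_lt x c) as [h|h].
  { rewrite shrink_pos_le by lra. repeat split; intros; lra. }
  unfold shrink_pos. rewrite pos_part_nonneg by lra.
  set (m := x - c).
  assert (hsq : sqrt (m * (m + 4 * c)) ^ 2 = m * (m + 4 * c))
    by (apply pow2_sqrt; unfold m; nra).
  pose proof (sqrt_pos (m * (m + 4 * c))).
  set (s := sqrt (m * (m + 4 * c))) in *.
  assert (hroot : (x - (m + s) / 2) * (c + (m + s) / 2) = c ^ 2)
    by (unfold m in *; nra).
  assert (hs : m < s) by (unfold m in *; nra).
  unfold m in *. repeat split; intros; nra.
Qed.

Lemma obj_lt_shrink (x y : R) : y <> shrink x -> obj x (shrink x) < obj x y.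
Proof.
  intro hy. destruct (Rle_or_lt 0 x) as [hx|hx].
  - exact (obj_lt_stationary x (shrink x) y (stationary_shrink x hx) hy).
  - rewrite <- (obj_opp x (shrink x)), <- (obj_opp x y), <- shrink_opp.
    apply obj_lt_stationary; [apply stationary_shrink; lra|].
    rewrite shrink_opp. lra.
Qed.

Lemma continuity_shrink_pos : continuity shrink_pos.
Proof.
  intro z. unfold shrink_pos.
  set (m := fun z => pos_part (z - c)).
  assert (hm : continuity m).
  { intro t. apply (continuity_pt_comp (fun t => t - c) pos_part);
      [| apply continuity_pos_part].
    apply continuity_pt_minus;
      [apply continuity_pt_id | apply continuity_pt_const; now intros ??]. }
  change (continuity_pt (fun z => (m z + sqrt (m z * (m z + 4 * c))) / 2) z).
  apply continuity_pt_div; [| apply continuity_pt_const; now intros ?? | lra].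
  apply continuity_pt_plus; [apply hm|].
  apply (continuity_pt_comp (fun z => m z * (m z + 4 * c)) sqrt).
  - apply continuity_pt_mult; [apply hm|].
    apply continuity_pt_plus; [apply hm | apply continuity_pt_const; now intros ??].
  - apply continuity_pt_sqrt. pose proof (pos_part_ge0 (z - c)).
    unfold m. nra.
Qed.

Lemma continuity_shrink : continuity shrink.
Proof.
  intro z. apply continuity_pt_minus; [apply continuity_shrink_pos|].
  apply (continuity_pt_comp Ropp shrink_pos);
    [apply continuity_pt_opp, continuity_pt_id | apply continuity_shrink_pos].
Qed.

End Shrinkage.

Lemma gdp_obj_eq (sigma alpha x b : R) : 0 < alpha ->
  gdp_obj sigma alpha x b = obj (sigma * gdp_eta alpha) x b.
Proof.
  intro ha. unfold gdp_obj, gdp_pen, obj.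
  replace ((sigma * gdp_eta alpha) ^ 2) with (sigma ^ 2 * (alpha + 1)); [ring|].
  unfold gdp_eta. rewrite Rpow_mult_distr, pow2_sqrt by lra. ring.
Qed.

Theorem proposition4 (sigma alpha : R) (hsigma : 0 < sigma) (halpha : 0 < alpha) :
  (forall bhat : R, exists! b : R, is_argmin (gdp_obj sigma alpha bhat) b) /\
  (exists betatilde : R -> R,
      (forall bhat : R, is_argmin (gdp_obj sigma alpha bhat) (betatilde bhat)) /\
      continuity betatilde).
Proof.
  set (c := sigma * gdp_eta alpha).
  assert (hc : 0 < c).
  { apply Rmult_lt_0_compat; [exact hsigma|]. apply sqrt_lt_R0. lra. }
  assert (hstrict : forall x y, y <> shrink c x ->
            gdp_obj sigma alpha x (shrink c x) < gdp_obj sigma alpha x y).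
  { intros x y hy. rewrite !gdp_obj_eq by exact halpha. now apply obj_lt_shrink. }
  split.
  - intro x. exists (shrink c x). split.
    + exact (is_argmin_of_strict _ _ (hstrict x)).
    + intros b hb. symmetry. exact (is_argmin_strict_eq _ _ _ (hstrict x) hb).
  - exists (shrink c). split.
    + intro x. exact (is_argmin_of_strict _ _ (hstrict x)).
    + exact (continuity_shrink c hc).
Qed.
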